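(* Let $P$ be an $n\times n$ complex matrix and let $S_P: M_n\to M_n$ be the Schur product map $S_P(B)=P\circ B$. Then $S_P$ is PPT if and only if $P\ge 0$ and $P$ is diagonal.
   Context: For $A=(a_{i,j}),B=(b_{i,j})$ of the same size, the Schur product is $A\circ B=(a_{i,j}b_{i,j})$. A linear map is completely positive (CP) if $\phi\otimes \mathrm{id}_k$ is positive for all $k$. A CP map $\phi: M_n\to M_n$ is PPT if $T\circ\phi$ is CP, where $T$ is the transpose map on $M_n$. *)

From HB Require Import structures.
From mathcomp Require Import all_boot all_order all_algebra.
Set Implicit Arguments. Unset Strict Implicit. Unset Printing Implicit Defensive.
Import Order.TTheory GRing.Theory Num.Theory.
Local Open Scope ring_scope.

(* C : numClosedFieldType plays the role of the complex numbers (with its conjugation Num.conj). *)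

Definition adjmx {C : numClosedFieldType} {m n : nat} (A : 'M[C]_(m, n)) : 'M[C]_(n, m) :=
  (map_mx Num.conj A)^T.

(* Positive semidefinite: v^* A v >= 0 (real, nonnegative) for every vector v. *)
Definition psd {C : numClosedFieldType} {m : nat} (A : 'M[C]_m) : Prop :=
  forall v : 'cV[C]_m, 0 <= (adjmx v *m A *m v) 0 0.

Definition positive_map {C : numClosedFieldType} {n : nat} (phi : 'M[C]_n -> 'M[C]_n) : Prop :=
  forall A : 'M[C]_n, psd A -> psd (phi A).

(* The k-th amplification of phi acting on M_k(M_n), viewed as block matrices
   in 'M_(\sum_(i<k) n): it applies phi blockwise. *)
Definition ampl {C : numClosedFieldType} {n : nat} (k : nat)
  (phi : 'M[C]_n -> 'M[C]_n) (X : 'I_k -> 'I_k -> 'M[C]_n)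
  : 'M[C]_(\sum_(i < k) n)%N :=
  \mxblock_(i < k, j < k) phi (X i j).

Definition blockmx_of {C : numClosedFieldType} {n : nat} (k : nat)
  (X : 'I_k -> 'I_k -> 'M[C]_n) : 'M[C]_(\sum_(i < k) n)%N :=
  \mxblock_(i < k, j < k) X i j.

(* Completely positive: phi (x) id_k is positive for every k. *)
Definition completely_positive {C : numClosedFieldType} {n : nat}
  (phi : 'M[C]_n -> 'M[C]_n) : Prop :=
  forall (k : nat) (X : 'I_k -> 'I_k -> 'M[C]_n),
    psd (blockmx_of X) -> psd (ampl phi X).

Definition transpose_map {C : numClosedFieldType} {n : nat} (A : 'M[C]_n) : 'M[C]_n := A^T.

Definition PPT {C : numClosedFieldType} {n : nat} (phi : 'M[C]_n -> 'M[C]_n) : Prop :=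
  completely_positive phi /\ completely_positive (fun B => transpose_map (phi B)).

Definition schur {C : numClosedFieldType} {m n : nat} (A B : 'M[C]_(m, n)) : 'M[C]_(m, n) :=
  \matrix_(i, j) (A i j * B i j).

Definition schur_map {C : numClosedFieldType} {n : nat} (P : 'M[C]_n) : 'M[C]_n -> 'M[C]_n :=
  fun B => schur P B.

From mathcomp Require Import all_boot all_order all_algebra.
From mathcomp Require Import ring.
Set Implicit Arguments. Unset Strict Implicit. Unset Printing Implicit Defensive.
Import Order.TTheory GRing.Theory Num.Theory.
Local Open Scope ring_scope.

(* A diagonal Schur multiplier acts as B |-> sum_r P_rr E_rr B E_rr, so each
   quadratic form of its amplification is a nonnegative combination of
   quadratic forms of the argument: it is completely positive, and since its
   values are diagonal it commutes with the transpose.  Conversely, S_P maps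
   the all-ones matrix to P, so P >= 0; and T o S_P applied to the psd block
   matrix (E_ab)_{a,b in {i,j}} gives a block matrix whose positivity means
   0 <= P_ij y + conj(y) P_ji for every scalar y, which forces P_ij = 0. *)

Local Notation qform u A v := ((adjmx u *m A *m v) 0 0).

Lemma ge0_linear_conj_eq0 (C : numClosedFieldType) (a b : C) :
  (forall y, 0 <= a * y + y^* * b) -> a = 0.
Proof.
move=> ge0.
have eq0 (x : C) : 0 <= x -> 0 <= - x -> x = 0.
  by rewrite oppr_ge0 => x_ge0 x_le0; apply/le_anti/andP.
have ab0 : a + b = 0.
  apply: eq0; first by have := ge0 1; rewrite rmorph1 mulr1 mul1r.
  by have := ge0 (-1); rewrite rmorphN1 mulrN1 mulN1r opprD.
have iab0 : 'i * (a - b) = 0.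
  apply: eq0.
    suff -> : 'i * (a - b) = a * 'i + 'i^* * b by [].
    by rewrite conjCi; ring.
  suff -> : - ('i * (a - b)) = a * - 'i + (- 'i)^* * b by [].
  by rewrite rmorphN /= conjCi; ring.
move/eqP: iab0; rewrite mulf_eq0 (negbTE (neq0Ci C)) subr_eq0 => /eqP a_eq_b.
by move/eqP: ab0; rewrite -a_eq_b -mulr2n mulrn_eq0 => /eqP.
Qed.

Section QuadraticForms.
Variable C : numClosedFieldType.

Lemma qformE m (u v : 'cV[C]_m) (A : 'M[C]_m) :
  qform u A v = \sum_r \sum_s (u r 0)^* * A r s * v s 0.
Proof.
rewrite mxE exchange_big; apply: eq_bigr => s _.
by rewrite mxE mulr_suml; apply: eq_bigr => r _; rewrite !mxE.
Qed.

Lemma adjmxZ m n a (A : 'M[C]_(m, n)) : adjmx (a *: A) = a^* *: adjmx A.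
Proof. by rewrite /adjmx map_mxZ linearZ. Qed.

Lemma qformZ m (u v : 'cV[C]_m) (A : 'M[C]_m) c :
  qform u (c *: A) v = c * qform u A v.
Proof. by rewrite -scalemxAr -scalemxAl mxE. Qed.

Lemma adjmx_delta m n (i : 'I_m) (j : 'I_n) :
  adjmx (delta_mx i j : 'M[C]_(m, n)) = delta_mx j i.
Proof. by rewrite /adjmx map_delta_mx trmx_delta. Qed.

Lemma qform_delta m (u v : 'cV[C]_m) (p q : 'I_m) :
  qform u (delta_mx p q) v = (u p 0)^* * v q 0.
Proof.
rewrite -(mul_delta_mx (0 : 'I_1)) mulmxA -colE -mulmxA -rowE.
by rewrite mxE big_ord1 !mxE.
Qed.

Lemma qform_scale_delta m (A : 'M[C]_m) (i j : 'I_m) a b :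
  qform (a *: delta_mx i 0 : 'cV_m) A (b *: delta_mx j 0 : 'cV_m) = a^* * A i j * b.
Proof.
rewrite adjmxZ adjmx_delta -scalemxAl -scalemxAr -rowE -colE !mxE.
by rewrite mulrC.
Qed.

Lemma adjmx_mxcol k n (w : 'I_k -> 'cV[C]_n) :
  adjmx (\mxcol_a w a) = \mxrow_a adjmx (w a).
Proof. by apply/matrixP => r s; rewrite !mxE. Qed.

Lemma qform_mxblock k n (w : 'I_k -> 'cV[C]_n) (B : 'I_k -> 'I_k -> 'M[C]_n) :
  qform (\mxcol_a w a) (\mxblock_(a < k, b < k) B a b) (\mxcol_b w b)
  = \sum_a \sum_b qform (w a) (B a b) (w b).
Proof.
rewrite adjmx_mxcol mul_mxrow_mxblock mul_mxrow_mxcol summxE [RHS]exchange_big.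
by apply: eq_bigr => b _; rewrite mulmx_suml summxE.
Qed.

Lemma psd_mxblockP k n (B : 'I_k -> 'I_k -> 'M[C]_n) :
  psd (\mxblock_(a < k, b < k) B a b) <->
  forall w : 'I_k -> 'cV[C]_n, 0 <= \sum_a \sum_b qform (w a) (B a b) (w b).
Proof.
split=> [Bpsd w|Bpsd v]; first by rewrite -qform_mxblock.
by rewrite -[v]submxcolK qform_mxblock.
Qed.

Lemma psd_mxblock1 n (B : 'I_1 -> 'I_1 -> 'M[C]_n) :
  psd (\mxblock_(a < 1, b < 1) B a b) <-> psd (B 0 0).
Proof.
rewrite psd_mxblockP; split=> [Bpsd v|Bpsd w]; last by rewrite !big_ord1.
by have := Bpsd (fun _ => v); rewrite !big_ord1.
Qed.

Lemma adjmx_mul_conjC m (u v : 'cV[C]_m) :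
  (adjmx u *m v) 0 0 = ((adjmx v *m u) 0 0)^*.
Proof.
rewrite !mxE rmorph_sum; apply: eq_bigr => i _.
by rewrite !mxE rmorphM /= conjCK mulrC.
Qed.

Lemma psd_mxblock_gram k n (y : 'I_k -> 'cV[C]_n) :
  psd (\mxblock_(a < k, b < k) (y a *m adjmx (y b))).
Proof.
apply/psd_mxblockP => w.
pose s := \sum_a (adjmx (w a) *m y a) 0 0.
suff -> : \sum_a \sum_b qform (w a) (y a *m adjmx (y b)) (w b) = s * s^*.
  exact: mul_conjC_ge0.
rewrite mulr_suml; apply: eq_bigr => a _.
rewrite rmorph_sum mulr_sumr; apply: eq_bigr => b _.
by rewrite mulmxA -mulmxA mxE big_ord1 (adjmx_mul_conjC (y b)).
Qed.

Lemma psd_gram n (y : 'cV[C]_n) : psd (y *m adjmx y).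
Proof. exact/(psd_mxblock1 (fun _ _ => _))/(psd_mxblock_gram (fun _ => y)). Qed.

End QuadraticForms.

Section CompletelyPositiveMaps.
Variables (C : numClosedFieldType) (n : nat).
Implicit Types (phi psi : 'M[C]_n -> 'M[C]_n).

Lemma eq_completely_positive phi psi :
  phi =1 psi -> completely_positive phi -> completely_positive psi.
Proof.
move=> eq_phi phiCP k X /phiCP.
by rewrite /ampl (eq_mxblock (fun i j => eq_phi (X i j))).
Qed.

Lemma completely_positive_positive phi : completely_positive phi -> positive_map phi.
Proof.
move=> phiCP A Apsd.
have /phiCP : psd (blockmx_of (fun (_ _ : 'I_1) => A)) by apply/psd_mxblock1.
by rewrite /ampl psd_mxblock1.
Qed.

End CompletelyPositiveMaps.

Section SchurProductMaps.
Variables (C : numClosedFieldType) (n : nat) (P : 'M[C]_n).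

Lemma schur_delta (p q : 'I_n) : schur P (delta_mx p q) = P p q *: delta_mx p q.
Proof.
apply/matrixP => r s; rewrite !mxE.
by case: eqP => [->|_]; case: eqP => [->|_]; rewrite ?andbF ?mulr0.
Qed.

Lemma schur_const1 : schur P (const_mx 1) = P.
Proof. by apply/matrixP => r s; rewrite !mxE mulr1. Qed.

Lemma psd_const1 : psd (const_mx 1 : 'M[C]_n).
Proof.
have -> : (const_mx 1 : 'M[C]_n) = (const_mx 1 : 'cV[C]_n) *m adjmx (const_mx 1).
  by apply/matrixP => r s; rewrite !mxE big_ord1 !mxE rmorph1 mulr1.
exact: psd_gram.
Qed.

Lemma psd_of_positive_schur : positive_map (schur_map P) -> psd P.
Proof. by move=> /(_ _ psd_const1); rewrite /schur_map schur_const1. Qed.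

Lemma psd_diag_ge0 (i : 'I_n) : psd P -> 0 <= P i i.
Proof.
by move=> /(_ (1 *: delta_mx i 0)); rewrite qform_scale_delta rmorph1 mul1r mulr1.
Qed.

Lemma transpose_schur_cp_offdiag (i j : 'I_n) :
  completely_positive (fun B => transpose_map (schur_map P B)) ->
  i != j -> P i j = 0.
Proof.
move=> TS_cp ij; apply: (@ge0_linear_conj_eq0 _ _ (P j i)) => y.
pose f (a : 'I_2) := if a == 0 then i else j.
have /TS_cp : psd (blockmx_of (fun a b => delta_mx (f a) (f b) : 'M[C]_n)).
  have -> : blockmx_of (fun a b => delta_mx (f a) (f b) : 'M[C]_n) =
            \mxblock_(a, b) (delta_mx (f a) 0 *m adjmx (delta_mx (f b) 0 : 'cV[C]_n)).
    by apply: eq_mxblock => a b; rewrite adjmx_delta mul_delta_mx.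
  exact: psd_mxblock_gram.
(* The test vector (e_j, y e_i) picks out exactly the two off-diagonal terms. *)
pose w (a : 'I_2) : 'cV[C]_n := if a == 0 then delta_mx j 0 else y *: delta_mx i 0.
rewrite /ampl => /psd_mxblockP/(_ w).
rewrite /transpose_map /schur_map.
under eq_bigr do under eq_bigr do rewrite schur_delta linearZ /=.
rewrite !big_ord_recl !big_ord0 /= !trmx_delta !qformZ !qform_delta /f /w /= !mxE.
have ji : j != i by rewrite eq_sym.
rewrite !eqxx (negbTE ij) (negbTE ji) /= rmorph0 rmorph1 mulr1 mulr0.
by rewrite !(mul0r, mulr0, mul1r, mulr1, addr0, add0r) (mulrC (P j i)).
Qed.

Hypothesis P_diag : is_diag_mx P.

Lemma qform_schur_diag (u v : 'cV[C]_n) (A : 'M[C]_n) :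
  qform u (schur P A) v =
  \sum_r P r r *
    qform (u r 0 *: delta_mx r 0 : 'cV_n) A (v r 0 *: delta_mx r 0 : 'cV_n).
Proof.
rewrite qformE; apply: eq_bigr => r _.
rewrite (bigD1 r) //= big1 ?addr0 => [|s sr]; last first.
  by rewrite mxE (is_diag_mxP P_diag r s) ?(mulr0, mul0r) // eq_sym.
by rewrite qform_scale_delta mxE; ring.
Qed.

Lemma schur_diag_completely_positive :
  (forall r, 0 <= P r r) -> completely_positive (schur_map P).
Proof.
move=> P_ge0 k X /psd_mxblockP X_psd; apply/psd_mxblockP => w.
pose u r a : 'cV_n := w a r 0 *: delta_mx r 0.
have -> : \sum_a \sum_b qform (w a) (schur P (X a b)) (w b) =
          \sum_r P r r * \sum_a \sum_b qform (u r a) (X a b) (u r b).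
  under [RHS]eq_bigr do rewrite mulr_sumr; rewrite [RHS]exchange_big.
  apply: eq_bigr => a _; under eq_bigr do rewrite mulr_sumr; rewrite exchange_big.
  by apply: eq_bigr => b _; rewrite qform_schur_diag.
by apply: sumr_ge0 => r _; apply: mulr_ge0 (P_ge0 r) (X_psd (u r)).
Qed.

Lemma trmx_schur_diag (B : 'M[C]_n) : (schur P B)^T = schur P B.
Proof.
apply/matrixP => r s; rewrite !mxE.
have [->|rs] := eqVneq r s; first done.
by rewrite !(is_diag_mxP P_diag) ?mul0r // eq_sym.
Qed.

End SchurProductMaps.

Theorem mainTheorem8 (C : numClosedFieldType) (n : nat) (P : 'M[C]_n) :
  PPT (schur_map P) <-> psd P /\ is_diag_mx P.
Proof.
split=> [[S_cp TS_cp] | [P_psd P_diag]].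
  split; first exact/psd_of_positive_schur/completely_positive_positive.
  by apply/is_diag_mxP => i j; apply: transpose_schur_cp_offdiag.
have S_cp := schur_diag_completely_positive P_diag (fun r => psd_diag_ge0 r P_psd).
split=> //; apply: eq_completely_positive S_cp => B.
by rewrite /transpose_map /schur_map trmx_schur_diag.
Qed.
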